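(* Let $s\in(1,2]$ and let $\alpha$ be a cardinal number with $\alpha\geq\aleph_0$. Then none of the sets $H_s[0,1]=\{f\in C[0,1]:\dim_H G_f([0,1])=s\}$, $\overline{B}_s[0,1]=\{f\in C[0,1]:\overline{\dim}_B G_f([0,1])=s\}$, $\underline{B}_s[0,1]=\{f\in C[0,1]:\underline{\dim}_B G_f([0,1])=s\}$ and $B_s[0,1]=\{f\in C[0,1]:\dim_B G_f([0,1])=s\}$ is $(\alpha,\beta)$-spaceable, for any cardinal number $\beta$.
   Context: $C[0,1]$ is the real Banach space of real-valued continuous functions on $[0,1]$ with the maximum norm. $G_f(X)=\{(x,f(x)):x\in X\}$. $\dim_H$, $\overline{\dim}_B$, $\underline{\dim}_B$, $\dim_B$ denote Hausdorff, upper box, lower box and box dimension ($\dim_B$ being defined when lower and upper box dimensions coincide). For cardinals $\alpha<\beta$, a subset $A$ of a topological vector space is $\alpha$-lineable if there is an $\alpha$-dimensional subspace $M\subseteq A\cup\{0\}$, and $(\alpha,\beta)$-spaceable if it is $\alpha$-lineable and every $\alpha$-dimensional subspace $W_\alpha\subseteq A\cup\{0\}$ is contained in a closed $\beta$-dimensional subspace $W_\beta\subseteq A\cup\{0\}$. *)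

From HB Require Import structures.
From mathcomp Require Import all_boot all_order all_algebra.
From mathcomp Require Import all_classical all_reals all_analysis.
Set Implicit Arguments. Unset Strict Implicit. Unset Printing Implicit Defensive.
Import Order.TTheory GRing.Theory Num.Theory.
Import numFieldNormedType.Exports.
Local Open Scope classical_set_scope.
Local Open Scope ring_scope.

Section Defs.
Variable R : realType.

Definition dist2 (p q : R * R) : R :=
  Num.sqrt ((p.1 - q.1) ^+ 2 + (p.2 - q.2) ^+ 2).

Definition diam (U : set (R * R)) : \bar R :=
  if pselect (U = set0) then 0%E
  else ereal_sup [set (dist2 pq.1 pq.2)%:E | pq in U `*` U].

Definition diam_pow (U : set (R * R)) (s : R) : \bar R :=
  if pselect (U = set0) then 0%E
  else match diam U with
       | r%:E => (r `^ s)%:E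
       | +oo%E => +oo%E
       | -oo%E => 0%E
       end.

Definition hausdorff_delta (s delta : R) (F : set (R * R)) : \bar R :=
  ereal_inf [set (\sum_(0 <= i <oo) diam_pow (U i) s)%E
            | U in [set U : nat -> set (R * R) |
                    F `<=` \bigcup_i U i /\ forall i, (diam (U i) <= delta%:E)%E]].

(* s-dimensional Hausdorff measure: limit as delta -> 0+ (= sup over delta > 0) *)
Definition hausdorff_measure (s : R) (F : set (R * R)) : \bar R :=
  ereal_sup [set hausdorff_delta s delta F | delta in `]0, +oo[].

Definition dimH (F : set (R * R)) : \bar R :=
  ereal_inf [set s%:E | s in [set s : R | 0 <= s /\ hausdorff_measure s F = 0%E]].

Definition cover_number (delta : R) (F : set (R * R)) : \bar R :=
  ereal_inf [set (n%:R)%:E | n in [set n : nat | exists U : nat -> set (R * R),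
      F `<=` \bigcup_(i in `I_n) U i /\ forall i, (i < n)%N -> (diam (U i) <= delta%:E)%E]].

Definition box_ratio (F : set (R * R)) (delta : R) : \bar R :=
  match cover_number delta F with
  | r%:E => (ln r / - ln delta)%:E
  | _ => +oo%E
  end.

(* upper box dimension: limsup_{delta -> 0+} of box_ratio *)
Definition upper_box_dim (F : set (R * R)) : \bar R :=
  ereal_inf [set ereal_sup [set box_ratio F delta | delta in `]0, e[] | e in `]0, 1[].

(* lower box dimension: liminf_{delta -> 0+} of box_ratio *)
Definition lower_box_dim (F : set (R * R)) : \bar R :=
  ereal_sup [set ereal_inf [set box_ratio F delta | delta in `]0, e[] | e in `]0, 1[].

(* An element of C[0,1] is represented by its (unique) extension to R that is
   constant on ]-oo,0] and on [1,+oo[; this is a linear bijection between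
   C[0,1] and the set C01 below, and the max norm on [0,1] is preserved. *)
Definition C01 : set (R -> R) :=
  [set f : R -> R | continuous f /\ (forall x : R, x <= 0 -> f x = f 0)
                        /\ (forall x : R, 1 <= x -> f x = f 1)].

Definition zerof : R -> R := fun _ => 0.

Definition graph (f : R -> R) : set (R * R) := [set (x, f x) | x in `[0, 1]].

Definition lincomb (A : Type) (n : nat) (idx : 'I_n -> A) (c : 'I_n -> R)
    (b : A -> R -> R) : R -> R :=
  fun x => \sum_(k < n) c k * b (idx k) x.

(* M is a linear subspace of C[0,1] of (Hamel) dimension |A|:
   it has a Hamel basis indexed injectively by A (linearly independent:
   every finite subfamily is independent; spanning: M is the set of finite
   linear combinations) *)
Definition has_dim (M : set (R -> R)) (A : Type) : Prop :=
  M `<=` C01 /\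
  exists b : A -> (R -> R),
    injective b /\
    (forall (n : nat) (idx : 'I_n -> A) (c : 'I_n -> R), injective idx ->
        lincomb idx c b = zerof -> forall k, c k = 0) /\
    M = [set f | exists (n : nat) (idx : 'I_n -> A) (c : 'I_n -> R),
                   f = lincomb idx c b].

Definition closed_C01 (M : set (R -> R)) : Prop :=
  forall g, C01 g ->
    (forall e : R, 0 < e -> exists2 f, M f & forall x, 0 <= x <= 1 -> `|f x - g x| <= e) ->
    M g.

Definition lineable (X : set (R -> R)) (A : Type) : Prop :=
  exists M, has_dim M A /\ M `<=` X `|` [set zerof].

(* (alpha,beta)-spaceable, alpha = |A|, beta = |B| *)
Definition spaceable (X : set (R -> R)) (A B : Type) : Prop :=
  lineable X A /\
  forall W, has_dim W A -> W `<=` X `|` [set zerof] ->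
    exists W', W `<=` W' /\ closed_C01 W' /\ has_dim W' B /\ W' `<=` X `|` [set zerof].

Definition H_set (s : R) : set (R -> R) := [set f | C01 f /\ dimH (graph f) = s%:E].
Definition UB_set (s : R) : set (R -> R) := [set f | C01 f /\ upper_box_dim (graph f) = s%:E].
Definition LB_set (s : R) : set (R -> R) := [set f | C01 f /\ lower_box_dim (graph f) = s%:E].
Definition B_set (s : R) : set (R -> R) :=
  [set f | C01 f /\ lower_box_dim (graph f) = s%:E /\ upper_box_dim (graph f) = s%:E].

End Defs.

Definition card_lt_type (A B : Type) : Prop :=
  ([set: A] #<= [set: B])%card /\ ~ ([set: B] #<= [set: A])%card.

(* Each of the four sets is invariant under adding a constant to a function,
   which moves its graph by a vertical translation, an isometry of the plane;
   and none contains a constant function, whose graph is a segment, of Hausdorff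
   and box dimension at most 1 < s.  For such a set X, let (b a) be a Hamel basis
   of an infinite-dimensional subspace of X plus 0.  The shifted functions
   b a + K a still form a basis of a subspace of X plus 0, because the only
   constant in the span of (b a) is 0.  If the constants K a are chosen so that
   sup |b a| / K a gets arbitrarily small, then (b a + K a) / K a tends
   uniformly to 1; hence every closed subspace containing the new one contains
   the constant 1, which is not in X plus 0. *)

From HB Require Import structures.
From mathcomp Require Import all_boot all_order all_algebra.
From mathcomp Require Import all_classical all_reals all_analysis.
From mathcomp Require Import ring lra.
Import Order.TTheory GRing.Theory Num.Theory.
Import numFieldNormedType.Exports.
Local Open Scope classical_set_scope.
Local Open Scope ring_scope.

Lemma sum_mul_injective_index {R : pzSemiRingType} {A : Type} {n : nat}
    (idx : 'I_n -> A) (c : 'I_n -> R) :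
  exists m (idx' : 'I_m -> A) (c' : 'I_m -> R), injective idx' /\
    forall G : A -> R, \sum_(k < n) c k * G (idx k) = \sum_(j < m) c' j * G (idx' j).
Proof.
elim: n idx c => [|n IH] idx c.
  exists 0%N, (fun j : 'I_0 => match j with Ordinal _ p => False_rect _ (notF p) end), (fun _ => 0).
  by split=> [[]|G]; last by rewrite !big_ord0.
have [m [idx' [c' [inj' eq_sum]]]] := IH (fun k => idx (lift ord0 k)) (fun k => c (lift ord0 k)).
have [[j0 idx'j0]|new] := pselect (exists j, idx' j = idx ord0).
  exists m, idx', (fun j => c' j + (if j == j0 then c ord0 else 0)); split => // G.
  under [RHS]eq_bigr do rewrite mulrDl.
  rewrite big_ord_recl eq_sum big_split /= addrC; congr (_ + _).
  rewrite (bigD1 j0) //= eqxx big1 ?addr0 -?idx'j0 // => j /negbTE ->.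
  by rewrite mul0r.
pose extend T (x : T) (f : 'I_m -> T) (j : 'I_m.+1) :=
  if unlift ord0 j is Some j' then f j' else x.
exists m.+1, (extend _ (idx ord0) idx'), (extend _ (c ord0) c'); split.
  rewrite /extend => j1 j2.
  case: unliftP => [j1'|] ->; case: unliftP => [j2'|] -> //.
  - by move=> /inj' ->.
  - by move=> e; case: new; exists j1'.
  - by move=> e; case: new; exists j2'.
move=> G; rewrite big_ord_recl [RHS]big_ord_recl /extend unlift_none eq_sum.
by congr (_ + _); apply: eq_bigr => j _; rewrite liftK.
Qed.

Section Span.
Context {R : realType} {A : Type}.
Implicit Types (b : A -> R -> R) (K : A -> R).

Definition lin_span b : set (R -> R) :=
  [set f | exists n (idx : 'I_n -> A) (c : 'I_n -> R), f = lincomb idx c b].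

Definition lin_indep b : Prop :=
  forall n (idx : 'I_n -> A) (c : 'I_n -> R), injective idx ->
    lincomb idx c b = @zerof R -> forall k, c k = 0.

Definition shift_by b K : A -> R -> R := fun a x => b a x + K a.

Lemma lin_span_basis b a : lin_span b (b a).
Proof.
exists 1%N, (fun _ => a), (fun _ => 1).
by apply/funext => x; rewrite /lincomb big_ord1 mul1r.
Qed.

Lemma lin_span_sub b a1 a2 : lin_span b (fun x => b a1 x - b a2 x).
Proof.
exists 2%N, (fun k => if k == ord0 then a1 else a2), (fun k => if k == ord0 then 1 else -1).
by apply/funext => x; rewrite /lincomb big_ord_recr big_ord1 /= mul1r mulN1r.
Qed.

Lemma lincomb_shift_by n (idx : 'I_n -> A) (c : 'I_n -> R) b K :
  lincomb idx c (shift_by b K) =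
  (fun x => lincomb idx c b x + \sum_(k < n) c k * K (idx k)).
Proof.
by apply/funext => x; rewrite /lincomb -big_split; apply: eq_bigr => k _; rewrite mulrDr.
Qed.

Lemma lin_indep_lincomb_eq0 {b} K : lin_indep b ->
  forall n (idx : 'I_n -> A) (c : 'I_n -> R),
  lincomb idx c b = @zerof R -> \sum_(k < n) c k * K (idx k) = 0.
Proof.
move=> indep_b n idx c c_b0.
have [m [idx' [c' [inj' eq_sum]]]] := sum_mul_injective_index idx c.
have c'0 : forall j, c' j = 0.
  apply: (indep_b _ idx' c' inj'); apply/funext => x.
  by rewrite /lincomb -(eq_sum (b^~ x)); have := congr1 (fun f => f x) c_b0.
by rewrite eq_sum big1 // => j _; rewrite c'0 mul0r.
Qed.

End Span.

Section C01.
Context {R : realType}.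

Lemma C01_addc (f : R -> R) (t : R) : C01 f -> C01 (fun x => f x + t).
Proof.
move=> [f_cont [f_left f_right]]; split; [|split].
- by move=> x; apply: cvgD; [exact: f_cont | exact: cvg_cst].
- by move=> x x_le0; rewrite f_left.
- by move=> x x_ge1; rewrite f_right.
Qed.

Lemma C01_cst (t : R) : C01 (fun _ => t).
Proof. by split=> // x; exact: cvg_cst. Qed.

Lemma C01_bounded (f : R -> R) :
  C01 f -> exists B, forall x, 0 <= x <= 1 -> `|f x| <= B.
Proof.
move=> [f_cont _].
have [c _ c_max] := @EVT_max R (fun x => `|f x|) 0 1 ler01
  (continuous_subspaceT (fun x => continuous_comp (f_cont x) (@norm_continuous _ R^o (f x)))).
by exists `|f c| => x x01; apply: c_max; rewrite in_itv.
Qed.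

Lemma dominating_weights {A : Type} (B : A -> R) :
  infinite_set [set: A] ->
  exists K : A -> R, (forall a, 0 < K a) /\ forall e, 0 < e -> exists a, B a <= e * K a.
Proof.
move=> /infiniteP/pcard_surjP[g g_surj].
exists (fun a => (g a).+1%:R * (1 + `|B a|)); split=> [a|e e_gt0].
  by rewrite mulr_gt0 // ltr_pwDl.
have [a _ ga] := g_surj (Num.Def.trunc e^-1) I; exists a.
have e_ga : 1 <= e * (g a).+1%:R.
  rewrite -[leLHS](mulfV (lt0r_neq0 e_gt0)) ler_pM2l // ga; apply/ltW; exact: truncnS_gt.
rewrite mulrA; apply: le_trans (ler_wpM2r _ e_ga); last by rewrite addr_ge0.
by rewrite mul1r (le_trans (ler_norm _)) // lerDr.
Qed.

(* [(b a + K a) / K a] lies in the span and is uniformly within [e] of [1]. *)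
Lemma closed_lin_span_shift_cst1 {A : Type} {W : set (R -> R)} {b : A -> R -> R} {K : A -> R} :
  closed_C01 W -> lin_span (shift_by b K) `<=` W ->
  (forall e, 0 < e -> exists a, 0 < K a /\ forall x, 0 <= x <= 1 -> `|b a x| <= e * K a) ->
  W (fun _ => 1).
Proof.
move=> W_closed shift_W dom; apply: W_closed; first exact: C01_cst.
move=> e e_gt0; have [a [Ka_gt0 b_le]] := dom e e_gt0.
exists (lincomb (fun _ : 'I_1 => a) (fun _ => (K a)^-1) (shift_by b K)).
  by apply: shift_W; exists 1%N, (fun _ => a), (fun _ => (K a)^-1).
move=> x x01; rewrite /lincomb big_ord1 /shift_by.
have -> : (K a)^-1 * (b a x + K a) - 1 = b a x / K a.
  by field; rewrite gt_eqF.
by rewrite normrM normfV (gtr0_norm Ka_gt0) ler_pdivrMr // b_le.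
Qed.

End C01.

Section ShiftInvariant.
Context {R : realType} (X : set (R -> R)).
Hypothesis X_addc : forall f t, X f -> X (fun x => f x + t).
Hypothesis X_cst : forall t, ~ X (fun _ => t).

Local Notation X0 := (X `|` [set @zerof R]).

Lemma X0_cst t : X0 (fun _ => t) -> t = 0.
Proof. by case=> [/X_cst //|/(congr1 (fun f => f 0))]. Qed.

Section Basis.
Context {A : Type} {b : A -> R -> R} (K : A -> R).
Hypotheses (b_C01 : lin_span b `<=` @C01 R) (b_inj : injective b) (b_indep : lin_indep b).
Hypothesis b_X0 : lin_span b `<=` X0.

Lemma lin_span_cst t : lin_span b (fun _ => t) -> t = 0.
Proof. by move/b_X0/X0_cst. Qed.

Lemma shift_by_injective : injective (shift_by b K).
Proof.
move=> a1 a2 eq12.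
have diff_cst : (fun x => b a1 x - b a2 x) = (fun _ => K a2 - K a1).
  by apply/funext => x; have := congr1 (fun f => f x) eq12; rewrite /shift_by => e; lra.
have K12 : K a2 - K a1 = 0 by apply: lin_span_cst; rewrite -diff_cst; exact: lin_span_sub.
by apply: b_inj; apply/funext => x; have := congr1 (fun f => f x) diff_cst; rewrite /= K12; lra.
Qed.

Lemma shift_by_lin_indep : lin_indep (shift_by b K).
Proof.
move=> n idx c idx_inj; rewrite lincomb_shift_by => sum0.
set S := \sum_(k < n) _ in sum0.
have comb_cst : lincomb idx c b = (fun _ => - S).
  by apply/funext => x; have := congr1 (fun f => f x) sum0; rewrite /zerof => e; lra.
have S0 : - S = 0 by apply: lin_span_cst; rewrite -comb_cst; exists n, idx, c.
by apply: (b_indep _ _ _ idx_inj); rewrite comb_cst S0.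
Qed.

Lemma lin_span_shift_by_X0 : lin_span (shift_by b K) `<=` X0.
Proof.
move=> _ [n [idx [c ->]]]; rewrite lincomb_shift_by.
have [comb0|comb_neq0] := pselect (lincomb idx c b = @zerof R).
  right; apply/funext => x /=.
  by rewrite comb0 (lin_indep_lincomb_eq0 K b_indep _ _ _ comb0) addr0.
have : lin_span b (lincomb idx c b) by exists n, idx, c.
by case/b_X0 => // comb_X; left; apply: X_addc.
Qed.

Lemma lin_span_shift_by_C01 : lin_span (shift_by b K) `<=` @C01 R.
Proof.
move=> _ [n [idx [c ->]]]; rewrite lincomb_shift_by; apply: C01_addc.
by apply: b_C01; exists n, idx, c.
Qed.

Lemma has_dim_shift_by : has_dim (lin_span (shift_by b K)) A.
Proof.
split; first exact: lin_span_shift_by_C01.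
exists (shift_by b K); split; first exact: shift_by_injective.
by split; first exact: shift_by_lin_indep.
Qed.

End Basis.

Theorem not_spaceable_of_addc_invariant (A B : Type) :
  infinite_set [set: A] -> ~ spaceable X A B.
Proof.
move=> A_inf [[M [[M_C01 [b [b_inj [b_indep M_span]]]] M_X0]] extend].
change (M = lin_span b) in M_span; subst M.
have /choice[bnd b_bnd] : forall a, exists B, forall x, 0 <= x <= 1 -> `|b a x| <= B.
  by move=> a; apply: C01_bounded; exact/M_C01/lin_span_basis.
have [K [K_gt0 K_dom]] := dominating_weights bnd A_inf.
have [W [shift_W [W_closed [_ W_X0]]]] :=
  extend _ (has_dim_shift_by K M_C01 b_inj b_indep M_X0) (lin_span_shift_by_X0 K b_indep M_X0).
have W_cst1 : W (fun _ => 1).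
  apply: (closed_lin_span_shift_cst1 W_closed shift_W) => e e_gt0.
  have [a bnd_le] := K_dom e e_gt0.
  by exists a; split=> // x x01; exact: le_trans (b_bnd a x x01) bnd_le.
by have /X0_cst/eqP := W_X0 _ W_cst1; rewrite oner_eq0.
Qed.

End ShiftInvariant.

Section Isometry.
Context {R : realType}.
Implicit Types (phi psi : R * R -> R * R) (U F G : set (R * R)).
Local Open Scope ereal_scope.

Definition isometry phi := forall p q, dist2 (phi p) (phi q) = dist2 p q.

Lemma image_eq_set0 phi U : (phi @` U = set0) = (U = set0).
Proof. by apply/propext; split=> [/image_set0_set0 //|->]; rewrite image_set0. Qed.

Lemma sub_image_cancel phi psi G : cancel phi psi -> G `<=` psi @` (phi @` G).
Proof. by move=> phiK p Gp; exists (phi p); [exists p | rewrite phiK]. Qed.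

Lemma diam_isometry phi U : isometry phi -> diam (phi @` U) = diam U.
Proof.
move=> phi_iso; rewrite /diam image_eq_set0; destruct (pselect (U = set0)) => //.
congr ereal_sup; apply/seteqP; split.
- move=> _ [[_ _] [[p Up <-] [q Uq <-]] <-] /=.
  by exists (p, q) => //=; rewrite phi_iso.
- move=> _ [[p q] [Up Uq] <-] /=.
  by exists (phi p, phi q) => //=; [split; [exists p | exists q] | rewrite phi_iso].
Qed.

Lemma diam_pow_isometry phi U t : isometry phi -> diam_pow (phi @` U) t = diam_pow U t.
Proof. by move=> phi_iso; rewrite /diam_pow diam_isometry // image_eq_set0. Qed.

Lemma le_hausdorff_delta t d F G :
  F `<=` G -> hausdorff_delta t d F <= hausdorff_delta t d G.
Proof.
move=> FG; apply: le_ereal_inf => _ [U [G_U U_d] <-].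
by exists U => //; split=> //; exact: subset_trans G_U.
Qed.

Lemma hausdorff_delta_image_le phi t d G : isometry phi ->
  hausdorff_delta t d (phi @` G) <= hausdorff_delta t d G.
Proof.
move=> phi_iso; apply: le_ereal_inf => _ [U [G_U U_d] <-].
exists (fun i => phi @` U i).
  split=> [_ [p /G_U [i _ Uip] <-]|i]; first by exists i => //; exists p.
  by rewrite diam_isometry.
by apply: eq_eseriesr => i _; exact: diam_pow_isometry.
Qed.

Lemma le_cover_number d F G : F `<=` G -> cover_number d F <= cover_number d G.
Proof.
move=> FG; apply: le_ereal_inf => _ [n [U [G_U U_d]] <-].
by exists n => //; exists U; split=> //; exact: subset_trans G_U.
Qed.

Lemma cover_number_image_le phi d G : isometry phi ->
  cover_number d (phi @` G) <= cover_number d G.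
Proof.
move=> phi_iso; apply: le_ereal_inf => _ [n [U [G_U U_d]] <-].
exists n => //; exists (fun i => phi @` U i).
split=> [_ [p /G_U [i ni Uip] <-]|i ni]; first by exists i => //; exists p.
by rewrite diam_isometry // U_d.
Qed.

Section Invariance.
Context {phi psi : R * R -> R * R} (G : set (R * R)).
Hypotheses (phi_iso : isometry phi) (psi_iso : isometry psi) (phiK : cancel phi psi).

Lemma hausdorff_delta_isometry t d :
  hausdorff_delta t d (phi @` G) = hausdorff_delta t d G.
Proof.
apply/le_anti; rewrite hausdorff_delta_image_le //=.
apply: le_trans (hausdorff_delta_image_le psi t d _ psi_iso).
by apply: le_hausdorff_delta; exact: sub_image_cancel.
Qed.

Lemma cover_number_isometry d : cover_number d (phi @` G) = cover_number d G.
Proof.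
apply/le_anti; rewrite cover_number_image_le //=.
apply: le_trans (cover_number_image_le psi d _ psi_iso).
by apply: le_cover_number; exact: sub_image_cancel.
Qed.

Lemma dimH_isometry : dimH (phi @` G) = dimH G.
Proof.
have hm t : hausdorff_measure t (phi @` G) = hausdorff_measure t G.
  rewrite /hausdorff_measure; congr ereal_sup; congr image; apply/funext => d.
  exact: hausdorff_delta_isometry.
by rewrite /dimH; congr ereal_inf; congr image; apply/funext => t /=; rewrite hm.
Qed.

Lemma box_ratio_isometry : box_ratio (phi @` G) = box_ratio G.
Proof. by apply/funext => d; rewrite /box_ratio cover_number_isometry. Qed.

Lemma upper_box_dim_isometry : upper_box_dim (phi @` G) = upper_box_dim G.
Proof. by rewrite /upper_box_dim box_ratio_isometry. Qed.

Lemma lower_box_dim_isometry : lower_box_dim (phi @` G) = lower_box_dim G.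
Proof. by rewrite /lower_box_dim box_ratio_isometry. Qed.

End Invariance.

Definition vshift (t : R) (p : R * R) : R * R := (p.1, (p.2 + t)%R).

Lemma vshift_isometry t : isometry (vshift t).
Proof. by move=> p q; rewrite /dist2 /vshift /= opprD addrACA subrr addr0. Qed.

Lemma vshiftK t : cancel (vshift t) (vshift (- t)).
Proof. by case=> x y; rewrite /vshift /= addrK. Qed.

Lemma vshift_imageK t G : vshift (- t) @` (vshift t @` G) = G.
Proof.
apply/seteqP; split=> [_ [_ [p Gp <-] <-]|p Gp]; first by rewrite vshiftK.
by exists (vshift t p); [exists p | rewrite vshiftK].
Qed.

Lemma dimH_vshift t G : dimH (vshift t @` G) = dimH G.
Proof. exact: dimH_isometry (vshift_isometry t) (vshift_isometry (- t)) (vshiftK t). Qed.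

Lemma upper_box_dim_vshift t G : upper_box_dim (vshift t @` G) = upper_box_dim G.
Proof. exact: upper_box_dim_isometry (vshift_isometry t) (vshift_isometry (- t)) (vshiftK t). Qed.

Lemma lower_box_dim_vshift t G : lower_box_dim (vshift t @` G) = lower_box_dim G.
Proof. exact: lower_box_dim_isometry (vshift_isometry t) (vshift_isometry (- t)) (vshiftK t). Qed.

Lemma graph_addc (f : R -> R) (t : R) :
  graph (fun x => f x + t)%R = vshift t @` graph f.
Proof.
apply/seteqP; split=> [_ [x x01 <-]|_ [_ [x x01 <-] <-]]; last by exists x.
by exists (x, f x) => //; exists x.
Qed.

End Isometry.

Section Diameter.
Context {R : realType}.
Implicit Types (U F : set (R * R)).
Local Open Scope ereal_scope.

Lemma diam_set0 : diam (@set0 (R * R)) = 0.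
Proof. by rewrite /diam; destruct (pselect (@set0 (R * R) = set0)). Qed.

Lemma diam_ge0 U : 0 <= diam U.
Proof.
rewrite /diam; destruct (pselect (U = set0)) as [|U_neq0] => //.
have /set0P[p Up] : U != set0 by apply/eqP.
apply: le_ereal_sup_tmp; exists (dist2 p p)%:E; first by exists (p, p).
by rewrite /dist2 !subrr expr0n addr0 sqrtr0.
Qed.

Lemma diam_le U (d : R) : (0 <= d)%R ->
  (forall p q, U p -> U q -> (dist2 p q <= d)%R) -> diam U <= d%:E.
Proof.
move=> d_ge0 U_d; rewrite /diam; destruct (pselect (U = set0)); first by rewrite lee_fin.
by apply: ge_ereal_sup => _ [[p q] [Up Uq] <-]; rewrite lee_fin; exact: U_d.
Qed.

Lemma diam_pow_ge0 U t : 0 <= diam_pow U t.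
Proof.
rewrite /diam_pow; destruct (pselect (U = set0)) => //.
by case: (diam U) => [r| |] //=; rewrite lee_fin powR_ge0.
Qed.

Lemma diam_pow_le U (d t : R) : (0 <= t)%R -> diam U <= d%:E -> diam_pow U t <= (d `^ t)%:E.
Proof.
move=> t_ge0; have := diam_ge0 U; rewrite /diam_pow.
destruct (pselect (U = set0)); first by rewrite lee_fin powR_ge0.
case: (diam U) => [r| |] //= r_ge0 r_d; rewrite lee_fin in r_ge0 r_d *.
by apply: ge0_ler_powR => //; rewrite nnegrE (le_trans r_ge0).
Qed.

Lemma hausdorff_delta_ge0 t delta F : 0 <= hausdorff_delta t delta F.
Proof.
apply: le_ereal_inf_tmp => _ [U _ <-]; apply: nneseries_ge0 => n _ _.
exact: diam_pow_ge0.
Qed.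

Lemma cover_number_ge0 delta F : 0 <= cover_number delta F.
Proof. by apply: le_ereal_inf_tmp => _ [n _ <-]; rewrite lee_fin ler0n. Qed.

Lemma cover_number_le_finite_cover (d : R) {F n} {U : nat -> set (R * R)} :
  F `<=` \bigcup_(i in `I_n) U i -> (forall i, (i < n)%N -> diam (U i) <= d%:E) ->
  cover_number d F <= n%:R%:E.
Proof. by move=> F_U U_d; apply: ereal_inf_lbound; exists n => //; exists U. Qed.

Lemma hausdorff_delta_le_finite_cover {t d delta : R} {F n} {U : nat -> set (R * R)} :
  (0 <= t)%R -> (0 <= d <= delta)%R ->
  F `<=` \bigcup_(i in `I_n) U i -> (forall i, (i < n)%N -> diam (U i) <= d%:E) ->
  hausdorff_delta t delta F <= (n%:R * d `^ t)%:E.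
Proof.
move=> t_ge0 /andP[d_ge0 d_delta] F_U U_d.
pose V i := if (i < n)%N then U i else set0.
apply: le_trans (ereal_inf_lbound _) _.
  exists V => //; split=> [p /F_U [i ni Uip]|i]; first by exists i; rewrite // /V ni.
  rewrite /V; case: ifP => [ni|_]; last by rewrite diam_set0 lee_fin (le_trans d_ge0).
  by apply: le_trans (U_d i ni) _; rewrite lee_fin.
rewrite (nneseries_split 0 n) => [|k _]; last exact: diam_pow_ge0.
rewrite add0n eseries0 ?adde0 => [|i ni _]; last first.
  by rewrite /V leqNgt in ni; rewrite /V (negbTE ni) /diam_pow; case: pselect.
rewrite big_mkord; apply: le_trans.
  apply: (@lee_sum _ _ _ (fun _ => (d `^ t)%:E)) => i _.
  by rewrite /V ltn_ord; exact: diam_pow_le (U_d i (ltn_ord i)).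
by rewrite sumEFin sumr_const card_ord mulr_natl.
Qed.

End Diameter.

Lemma lower_box_dim_le_upper {R : realType} (F : set (R * R)) :
  (lower_box_dim F <= upper_box_dim F)%E.
Proof.
apply: ge_ereal_sup => _ [e e_in <-]; apply: le_ereal_inf_tmp => _ [e' e'_in <-].
move: e_in e'_in; rewrite /= !in_itv /= => /andP[e_gt0 _] /andP[e'_gt0 _].
have m_gt0 : 0 < Order.min e e' by rewrite lt_min e_gt0.
pose d := Order.min e e' / 2.
have d_gt0 : 0 < d by rewrite divr_gt0.
have : d < Order.min e e' by rewrite /d; lra.
rewrite lt_min => /andP[d_e d_e'].
apply: le_trans (ereal_inf_lbound _) (ereal_sup_ubound _); exists d => //;
  by rewrite /= in_itv /= d_gt0.
Qed.

Section UnitSegment.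
Context {R : realType}.

Definition unit_segment : set (R * R) := graph (@zerof R).

Definition piece (d : R) (i : nat) : set (R * R) :=
  [set (x, 0) | x in `[i%:R * d, i.+1%:R * d]].

Local Notation npieces d := (Num.Def.trunc d^-1).+1.
Implicit Types d delta t : R.

Lemma diam_piece d i : 0 <= d -> (diam (piece d i) <= d%:E)%E.
Proof.
move=> d_ge0; apply: diam_le => // _ _ [x x_in <-] [y y_in <-].
rewrite /dist2 /= subrr expr0n addr0 sqrtr_sqr.
have iSd : i.+1%:R * d = i%:R * d + d by rewrite -addn1 natrD mulrDl mul1r.
move: x_in y_in; rewrite /= !in_itv /= iSd => /andP[? ?] /andP[? ?].
by rewrite ler_norml; apply/andP; split; lra.
Qed.

Lemma unit_segment_cover d : 0 < d ->
  unit_segment `<=` \bigcup_(i in `I_(npieces d)) piece d i.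
Proof.
move=> d_gt0 _ [x x01 <-]; move: x01; rewrite /= in_itv /= => /andP[x_ge0 x_le1].
have xd_ge0 : 0 <= x / d by rewrite divr_ge0 // ltW.
exists (Num.Def.trunc (x / d)).
  by rewrite /= ltnS le_truncn // ler_pdivrMr // mulVf ?gt_eqF.
exists x => //; have /andP[xd_lb xd_ub] := truncn_itv xd_ge0.
rewrite ler_pdivlMr // in xd_lb; rewrite ltr_pdivrMr // in xd_ub.
by rewrite /= in_itv /= xd_lb ltW.
Qed.

Lemma npieces_le d : 0 < d <= 1 -> (npieces d)%:R <= 2 / d.
Proof.
move=> /andP[d_gt0 d_le1]; rewrite -addn1 natrD.
have : (Num.Def.trunc d^-1)%:R <= d^-1 by rewrite truncn_le invr_ge0 ltW.
have : 1 <= d^-1 by rewrite invf_ge1.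
lra.
Qed.

Lemma cover_number_unit_segment d : 0 < d <= 1 ->
  (cover_number d unit_segment <= (2 / d)%:E)%E.
Proof.
move=> /[dup] /andP[d_gt0 _] d01.
apply: le_trans (cover_number_le_finite_cover d (unit_segment_cover d d_gt0) _) _.
  by move=> i _; exact: diam_piece (ltW d_gt0).
by rewrite lee_fin npieces_le.
Qed.

Lemma hausdorff_delta_unit_segment t d delta : 0 <= t -> 0 < d <= 1 -> d <= delta ->
  (hausdorff_delta t delta unit_segment <= (2 * d `^ (t - 1))%:E)%E.
Proof.
move=> t_ge0 /[dup] /andP[d_gt0 _] d01 d_delta.
apply: le_trans
  (hausdorff_delta_le_finite_cover (d := d) t_ge0 _ (unit_segment_cover d d_gt0) _) _.
- by rewrite ltW // d_delta.
- by move=> i _; exact: diam_piece (ltW d_gt0).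
have -> : d `^ t = d * d `^ (t - 1).
  by rewrite -[X in X * _](powRr1 (ltW d_gt0)) -powRD subrKC // (gt_eqF d_gt0) implybT.
rewrite lee_fin mulrA ler_wpM2r ?powR_ge0 //.
by rewrite -ler_pdivlMr //; exact: npieces_le.
Qed.

Lemma hausdorff_measure_unit_segment t : 1 < t -> hausdorff_measure t unit_segment = 0%E.
Proof.
move=> t_gt1; have t1_gt0 : 0 < t - 1 by rewrite subr_gt0.
apply/le_anti/andP; split; last first.
  apply: le_ereal_sup_tmp; exists (hausdorff_delta t 1 unit_segment).
    by exists 1 => //; rewrite /= in_itv /= andbT.
  exact: hausdorff_delta_ge0.
apply: ge_ereal_sup => _ [delta delta_pos <-].
move: delta_pos; rewrite /= in_itv /= andbT => delta_gt0.
apply/lee_addgt0Pr => eta eta_gt0; rewrite add0e.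
(* [q] solves [2 * q `^ (t - 1) = eta]. *)
pose q := (eta / 2) `^ (t - 1)^-1.
pose d := Order.min delta (Order.min 1 q).
have q_gt0 : 0 < q by rewrite powR_gt0 // divr_gt0.
have d_gt0 : 0 < d by rewrite !lt_min delta_gt0 q_gt0 ltr01.
have [d_delta d_le1 d_q] : [/\ d <= delta, d <= 1 & d <= q].
  by split; rewrite !ge_min ?lexx ?orbT.
have t_ge0 : 0 <= t by rewrite ltW // (lt_trans ltr01).
apply: le_trans (hausdorff_delta_unit_segment t d delta t_ge0 _ d_delta) _.
  by rewrite d_gt0.
have : d `^ (t - 1) <= eta / 2.
  apply: le_trans (ge0_ler_powR (ltW t1_gt0) _ _ d_q) _;
    rewrite ?nnegrE ?(ltW d_gt0) ?(ltW q_gt0) //.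
  by rewrite /q -powRrM mulVf ?gt_eqF // powRr1 // divr_ge0 // ltW.
by rewrite lee_fin; lra.
Qed.

Lemma dimH_unit_segment_le t : 1 < t -> (dimH unit_segment <= t%:E)%E.
Proof.
move=> t_gt1; apply: ereal_inf_lbound; exists t => //.
by split; [rewrite ltW // (lt_trans ltr01) | exact: hausdorff_measure_unit_segment].
Qed.

Lemma box_ratio_unit_segment_le d : 0 < d < 1 ->
  (box_ratio unit_segment d <= (1 + ln 2 / - ln d)%:E)%E.
Proof.
move=> /andP[d_gt0 d_lt1]; have d01 : 0 < d <= 1 by rewrite d_gt0 ltW.
have := cover_number_unit_segment d d01; have := cover_number_ge0 d unit_segment.
rewrite /box_ratio; case: cover_number => [r| |] //= r_ge0 r_le.
rewrite !lee_fin in r_ge0 r_le *.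
have lnd_lt0 : ln d < 0 by rewrite ln_lt0 // d_gt0 d_lt1.
have ln2_ge0 : 0 <= ln (2 : R) by rewrite ln_ge0 // ler1n.
have ln_r : ln r <= ln 2 - ln d.
  have [r_le0|r_gt0] := leP r 0; first by rewrite ln0 //; lra.
  by rewrite -ln_div ?posrE // ler_ln ?posrE ?divr_gt0.
have -> : 1 + ln 2 / - ln d = (ln 2 - ln d) / - ln d.
  by field; rewrite lt_eqF.
by rewrite ler_pM2r ?invr_gt0 ?oppr_gt0.
Qed.

Lemma upper_box_dim_unit_segment_le t : 1 < t -> (upper_box_dim unit_segment <= t%:E)%E.
Proof.
move=> t_gt1; have t1_gt0 : 0 < t - 1 by rewrite subr_gt0.
have ln2_gt0 : 0 < ln (2 : R) by rewrite ln_gt0 // ltr1n.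
(* Below [e], [ln 2 / - ln d < t - 1]. *)
pose e := expR (- ln 2 / (t - 1)).
have e_lt1 : e < 1 by rewrite expR_lt1 ltr_pdivrMr // mul0r oppr_lt0.
apply: le_trans (ereal_inf_lbound _) _.
  by exists e => //; rewrite /= in_itv /= expR_gt0.
apply: ge_ereal_sup => _ [d d_in <-]; move: d_in; rewrite /= in_itv /= => /andP[d_gt0 d_e].
have d01 : 0 < d < 1 by rewrite d_gt0 (lt_trans d_e).
apply: le_trans (box_ratio_unit_segment_le d d01) _; rewrite lee_fin -lerBrDl.
have lnd_lt0 : ln d < 0 by rewrite ln_lt0.
have : ln d * (t - 1) < - ln 2.
  by rewrite -ltr_pdivlMr // -[ltRHS]expRK ltr_ln ?posrE ?expR_gt0.
by rewrite ler_pdivrMr ?oppr_gt0 //; nra.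
Qed.

End UnitSegment.

Lemma graph_cst {R : realType} (t : R) : graph (fun _ => t) = vshift t @` unit_segment.
Proof. by rewrite -graph_addc; congr graph; apply/funext => x; rewrite /zerof add0r. Qed.

Lemma not_spaceable_graph_pred {R : realType} (Q : set (set (R * R))) (A B : Type) :
  infinite_set [set: A] -> (forall t G, Q G -> Q (vshift t @` G)) -> ~ Q unit_segment ->
  ~ spaceable [set f | C01 f /\ Q (graph f)] A B.
Proof.
move=> A_inf Q_vshift Q_seg; apply: not_spaceable_of_addc_invariant => //.
  move=> f t [f_C01 Q_f]; split; first exact: C01_addc.
  by rewrite graph_addc; exact: Q_vshift.
by move=> t [_]; rewrite graph_cst => /(Q_vshift (- t)); rewrite vshift_imageK.
Qed.

Theorem corollary2p11 (R : realType) (s : R) (hs : 1 < s <= 2)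
  (A : Type) (hA : infinite_set [set: A]) :
  forall B : Type, card_lt_type A B ->
    ~ spaceable (H_set s) A B /\ ~ spaceable (UB_set s) A B /\
    ~ spaceable (LB_set s) A B /\ ~ spaceable (B_set s) A B.
Proof.
move=> B _; have /andP[s_gt1 _] := hs.
have u_gt1 : 1 < (1 + s) / 2 by lra.
have below_s D : (D <= ((1 + s) / 2)%:E)%E -> D <> s%:E.
  by move=> D_le D_s; move: D_le; rewrite D_s lee_fin; lra.
have lower_seg := le_trans (lower_box_dim_le_upper _) (upper_box_dim_unit_segment_le _ u_gt1).
split; [|split; [|split]].
- apply: (not_spaceable_graph_pred (fun G => dimH G = s%:E)) => // [t G|].
    by rewrite dimH_vshift.
  exact/below_s/dimH_unit_segment_le.
- apply: (not_spaceable_graph_pred (fun G => upper_box_dim G = s%:E)) => // [t G|].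
    by rewrite upper_box_dim_vshift.
  exact/below_s/upper_box_dim_unit_segment_le.
- apply: (not_spaceable_graph_pred (fun G => lower_box_dim G = s%:E)) => // [t G|].
    by rewrite lower_box_dim_vshift.
  exact/below_s/lower_seg.
- apply: (not_spaceable_graph_pred
    (fun G => lower_box_dim G = s%:E /\ upper_box_dim G = s%:E)) => // [t G|[lower_s _]].
    by rewrite lower_box_dim_vshift upper_box_dim_vshift.
  exact: below_s lower_seg lower_s.
Qed.
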